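(* Let $E$ be an almost finitely generated $R$-module and $R\to T$ a ring morphism. Then $E\otimes_RT$ is an almost finitely generated $T$-module.
   Context: Rings are commutative and unital. An $A$-module $E$ is almost finitely generated (afg) over $A$ if there is a ring morphism $A\to S$ such that $E$ is a finitely generated $S$-module whose induced $A$-module structure is the original one. *)

From HB Require Import structures.
From mathcomp Require Import all_boot all_order all_algebra.
Set Implicit Arguments. Unset Strict Implicit. Unset Printing Implicit Defensive.
Import GRing.Theory.
Local Open Scope ring_scope.

Definition module_action (S : pzRingType) (V : zmodType) (act : S -> V -> V) : Prop :=
  [/\ forall v, act 1 v = v,
      forall a b v, act a (act b v) = act (a * b) v,
      forall a b v, act (a + b) v = act a v + act b v
    & forall a u v, act a (u + v) = act a u + act a v].

Definition fin_gen_action (S : pzRingType) (V : zmodType) (act : S -> V -> V) : Prop :=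
  exists (n : nat) (xs : 'I_n -> V),
    forall v, exists cs : 'I_n -> S, v = \sum_(i < n) act (cs i) (xs i).

Definition afg (A : comPzRingType) (E : lmodType A) : Prop :=
  exists (S : comPzRingType) (f : {rmorphism A -> S}) (act : S -> E -> E),
    [/\ module_action act,
        forall (a : A) (x : E), act (f a) x = a *: x
      & fin_gen_action act].

(* (F, b) is the tensor product E (x)_R T, with b x t = x (x) t, together with
   its natural T-module structure t' (x (x) t) = x (x) (t' t). *)
Definition is_tensor_product (R T : comPzRingType) (phi : {rmorphism R -> T})
    (E : lmodType R) (F : lmodType T) (b : E -> T -> F) : Prop :=
  [/\ (forall x y t, b (x + y) t = b x t + b y t)
      /\ (forall x t u, b x (t + u) = b x t + b x u),
      (forall (r : R) x t, b (r *: x) t = phi r *: b x t)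
      /\ (forall (r : R) x t, b x (phi r * t) = phi r *: b x t),
      (forall (s : T) x t, s *: b x t = b x (s * t))
    & forall (G : lmodType R) (c : E -> T -> G),
        (forall x y t, c (x + y) t = c x t + c y t) ->
        (forall x t u, c x (t + u) = c x t + c x u) ->
        (forall (r : R) x t, c (r *: x) t = r *: c x t) ->
        (forall (r : R) x t, c x (phi r * t) = r *: c x t) ->
        exists g : F -> G,
          [/\ (forall u v, g (u + v) = g u + g v),
              (forall (r : R) v, g (phi r *: v) = r *: g v),
              (forall x t, g (b x t) = c x t)
            & forall g' : F -> G,
                (forall u v, g' (u + v) = g' u + g' v) ->
                (forall (r : R) v, g' (phi r *: v) = r *: g' v) ->
                (forall x t, g' (b x t) = c x t) ->
                forall v, g' v = g v]].

From HB Require Import structures.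
From mathcomp Require Import all_boot all_order all_algebra.
From mathcomp Require Import boolp.
Set Implicit Arguments. Unset Strict Implicit. Unset Printing Implicit Defensive.
Import GRing.Theory.
Local Open Scope ring_scope.

(* Suppose S acts on E with generators x_1, ..., x_n and F = E (x)_R T.  Every
   s in S induces the T-linear map s (x) id on F; these maps commute with each
   other and with the scalars of T, so the center of their commutant is a
   commutative ring receiving T and acting on F.  The x_i (x) 1 generate F over
   it: their span is an R-submodule containing every pure tensor
   x (x) t = t . sum_i (s_i (x) id)(x_i (x) 1), and by the universal property
   the pure tensors span no proper R-submodule.  This ring stands in for
   S (x)_R T, which is never constructed. *)

Lemma morph_add0 (U V : zmodType) (k : U -> V) : {morph k : u v / u + v} -> k 0 = 0.
Proof. by move=> kD; apply: (addrI (k 0)); rewrite -kD !addr0. Qed.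

Lemma morph_addN (U V : zmodType) (k : U -> V) :
  {morph k : u v / u + v} -> {morph k : u / - u}.
Proof. by move=> kD u; apply: (addIr (k u)); rewrite -kD !addNr morph_add0. Qed.

Definition restrict_scalars (R T : pzRingType) (phi : {rmorphism R -> T})
  (F : lmodType T) : Type := F.

Section RestrictScalars.
Variables (R T : pzRingType) (phi : {rmorphism R -> T}) (F : lmodType T).
Local Notation FR := (restrict_scalars phi F).

HB.instance Definition _ := GRing.Zmodule.on FR.

Definition restrict_scale (r : R) (v : FR) : FR := phi r *: (v : F).

Lemma restrict_scaleA a c v :
  restrict_scale a (restrict_scale c v) = restrict_scale (a * c) v.
Proof. by rewrite /restrict_scale scalerA rmorphM. Qed.
Lemma restrict_scale1 : left_id 1 restrict_scale.
Proof. by move=> v; rewrite /restrict_scale rmorph1 scale1r. Qed.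
Lemma restrict_scaleDr : right_distributive restrict_scale +%R.
Proof. by move=> a u v; rewrite /restrict_scale scalerDr. Qed.
Lemma restrict_scaleDl v : {morph restrict_scale^~ v : a c / a + c}.
Proof. by move=> a c; rewrite /restrict_scale rmorphD scalerDl. Qed.
HB.instance Definition _ := GRing.Zmodule_isLmodule.Build R FR
  restrict_scaleA restrict_scale1 restrict_scaleDr restrict_scaleDl.

Lemma restrict_scalarsZ (r : R) (v : FR) : r *: v = (phi r *: (v : F) : FR).
Proof. by []. Qed.

End RestrictScalars.

Section CenterCommutant.
Variables (V : zmodType) (I : Type) (p : I -> {additive V -> V}).

Definition commutant (k : V -> V) : Prop :=
  {morph k : u v / u + v} /\ forall i v, k (p i v) = p i (k v).

Definition in_center_commutant (h : V -> V) : Prop :=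
  commutant h /\ forall k, commutant k -> forall v, h (k v) = k (h v).

Lemma family_in_center_commutant :
  (forall i j v, p i (p j v) = p j (p i v)) -> forall i, in_center_commutant (p i).
Proof.
move=> p_comm i; split=> [|k [_ kC] v]; last by rewrite kC.
by split=> [u v|j v]; [exact: raddfD | exact: p_comm].
Qed.

Lemma in_center_commutant0 : in_center_commutant (fun _ => 0).
Proof.
split=> [|k [kD _] v]; last by rewrite morph_add0.
by split=> [u v|i v]; rewrite ?addr0 ?raddf0.
Qed.

Lemma in_center_commutantN h : in_center_commutant h ->
  in_center_commutant (fun v => - h v).
Proof.
move=> [[hD hP] hC]; split=> [|k kC v].
  by split=> [u v|i v]; [rewrite hD opprD | rewrite hP raddfN].
by rewrite (morph_addN (proj1 kC)) hC.
Qed.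

Lemma in_center_commutantD h h' : in_center_commutant h -> in_center_commutant h' ->
  in_center_commutant (fun v => h v + h' v).
Proof.
move=> [[hD hP] hC] [[h'D h'P] h'C]; split=> [|k kC v].
  by split=> [u v|i v]; [rewrite hD h'D addrACA | rewrite hP h'P raddfD].
by rewrite (proj1 kC) hC // h'C.
Qed.

Lemma in_center_commutant1 : in_center_commutant id.
Proof. by do 2?split. Qed.

Lemma in_center_commutantM h h' : in_center_commutant h -> in_center_commutant h' ->
  in_center_commutant (h \o h').
Proof.
move=> [[hD hP] hC] [[h'D h'P] h'C]; split=> [|k kC v] /=.
  by split=> [u v|i v] /=; [rewrite h'D hD | rewrite h'P hP].
by rewrite h'C // hC.
Qed.

Record center_commutant := CenterCommutant {
  cc_fun :> V -> V;
  cc_funP : in_center_commutant cc_fun }.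

HB.instance Definition _ := gen_eqMixin center_commutant.
HB.instance Definition _ := gen_choiceMixin center_commutant.

Lemma cc_eq (h h' : center_commutant) : h =1 h' -> h = h'.
Proof.
case: h h' => h hP [h' h'P] /= /funext eq_hh'; subst h'.
by congr CenterCommutant; exact: Prop_irrelevance.
Qed.

Definition cc0 := CenterCommutant in_center_commutant0.
Definition ccN h := CenterCommutant (in_center_commutantN (cc_funP h)).
Definition ccD h h' := CenterCommutant (in_center_commutantD (cc_funP h) (cc_funP h')).
Definition cc1 := CenterCommutant in_center_commutant1.
Definition ccM h h' := CenterCommutant (in_center_commutantM (cc_funP h) (cc_funP h')).

Lemma cc_addrA : associative ccD.
Proof. by move=> h h' h''; apply: cc_eq => v /=; rewrite addrA. Qed.
Lemma cc_addrC : commutative ccD.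
Proof. by move=> h h'; apply: cc_eq => v /=; rewrite addrC. Qed.
Lemma cc_add0r : left_id cc0 ccD.
Proof. by move=> h; apply: cc_eq => v /=; rewrite add0r. Qed.
Lemma cc_addNr : left_inverse cc0 ccN ccD.
Proof. by move=> h; apply: cc_eq => v /=; rewrite addNr. Qed.
HB.instance Definition _ := GRing.isZmodule.Build center_commutant
  cc_addrA cc_addrC cc_add0r cc_addNr.

Lemma cc_mulrA : associative ccM.
Proof. by move=> h h' h''; apply: cc_eq. Qed.
Lemma cc_mulrC : commutative ccM.
Proof.
by move=> h h'; apply: cc_eq; apply: (proj2 (cc_funP h)); exact: (proj1 (cc_funP h')).
Qed.
Lemma cc_mul1r : left_id cc1 ccM.
Proof. by move=> h; apply: cc_eq. Qed.
Lemma cc_mulrDl : left_distributive ccM ccD.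
Proof. by move=> h h' h''; apply: cc_eq. Qed.
HB.instance Definition _ := GRing.Zmodule_isComPzRing.Build center_commutant
  cc_mulrA cc_mulrC cc_mul1r cc_mulrDl.

Lemma cc_fun_action : module_action cc_fun.
Proof. by split=> // h; case: (cc_funP h) => -[]. Qed.

End CenterCommutant.

Section ActionSpan.
Variables (S : pzRingType) (V : zmodType) (act : S -> V -> V).
Hypothesis actP : module_action act.
Variables (n : nat) (xs : 'I_n -> V).

Definition act_span : {pred V} :=
  [pred v | `[< exists cs : 'I_n -> S, v = \sum_(i < n) act (cs i) (xs i) >]].

Lemma act_spanP v :
  reflect (exists cs : 'I_n -> S, v = \sum_(i < n) act (cs i) (xs i)) (v \in act_span).
Proof. exact: asboolP. Qed.

Lemma fin_gen_act_span : (forall v, v \in act_span) -> fin_gen_action act.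
Proof. by move=> span_all; exists n, xs => v; apply/act_spanP. Qed.

Lemma act_span0 : 0 \in act_span.
Proof.
have [_ _ actDl _] := actP.
apply/act_spanP; exists (fun _ => 0); rewrite big1 // => i _.
exact: (@morph_add0 _ _ (act^~ (xs i)) (fun a c => actDl a c (xs i))).
Qed.

Lemma act_spanD u v : u \in act_span -> v \in act_span -> u + v \in act_span.
Proof.
move=> /act_spanP[cs ->] /act_spanP[ds ->]; apply/act_spanP.
have [_ _ actDl _] := actP.
by exists (fun i => cs i + ds i); rewrite -big_split; apply: eq_bigr => i _; rewrite actDl.
Qed.

Lemma act_span_act a v : v \in act_span -> act a v \in act_span.
Proof.
move=> /act_spanP[cs ->]; apply/act_spanP; exists (fun i => a * cs i).
have [_ actM _ actDr] := actP.
rewrite (big_morph (act a) (actDr a) (morph_add0 (actDr a))).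
by apply: eq_bigr => i _; rewrite actM.
Qed.

End ActionSpan.

Section TensorProduct.
Variables (R T : comPzRingType) (phi : {rmorphism R -> T}) (E : lmodType R)
  (F : lmodType T) (b : E -> T -> F).
Hypothesis tensorF : is_tensor_product phi b.
Local Notation FR := (restrict_scalars phi F).

Lemma tensor_ext (G : lmodType R) (k1 k2 : F -> G) :
  {morph k1 : u v / u + v} -> {morph k2 : u v / u + v} ->
  (forall r v, k1 (phi r *: v) = r *: k1 v) ->
  (forall r v, k2 (phi r *: v) = r *: k2 v) ->
  (forall x t, k1 (b x t) = k2 (b x t)) -> k1 =1 k2.
Proof.
have [[bDl bDr] [bZl bZr] _ univ] := tensorF.
move=> k1D k2D k1Z k2Z k12.
have [||||g [_ _ _ g_uniq]] := univ G (fun x t => k1 (b x t)).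
- by move=> x y t; rewrite bDl k1D.
- by move=> x t u; rewrite bDr k1D.
- by move=> r x t; rewrite bZl k1Z.
- by move=> r x t; rewrite bZr k1Z.
by move=> v; rewrite (g_uniq k1) // (g_uniq k2).
Qed.

Lemma tensor_map_ex (u : E -> E) : {morph u : x y / x + y} -> scalable u ->
  exists g : F -> F, [/\ {morph g : v w / v + w}, forall t v, g (t *: v) = t *: g v
    & forall x t, g (b x t) = b (u x) t].
Proof.
have [[bDl bDr] [bZl bZr] bT univ] := tensorF.
move=> uD uZ.
have [||||g [gD gZ gb _]] := univ FR (fun x t => b (u x) t : FR).
- by move=> x y t; rewrite uD bDl.
- by move=> x t t'; rewrite bDr.
- by move=> r x t; rewrite uZ bZl.
- by move=> r x t; rewrite bZr.
exists g; split=> // t.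
apply: (@tensor_ext FR (fun v => g (t *: v)) (fun v => t *: g v)).
- by move=> v w; rewrite scalerDr gD.
- by move=> v w; rewrite gD scalerDr.
- by move=> r v; rewrite scalerA mulrC -scalerA gZ.
- by move=> r v; rewrite gZ !restrict_scalarsZ scalerA mulrC -scalerA.
- by move=> x t'; rewrite bT !gb bT.
Qed.

Section PureTensorSpan.
Variable N : submodClosed FR.
Hypothesis N_pure : forall x t, b x t \in N.

Inductive submod_of : predArgType := Submod v & v \in N.
Definition submod_val w : FR := let: Submod v _ := w in v.
HB.instance Definition _ := [isSub of submod_of for submod_val].
HB.instance Definition _ := [Choice of submod_of by <:].
HB.instance Definition _ := [SubChoice_isSubLmodule of submod_of by <:].

(* Universality yields a linear retraction of F onto N fixing pure tensors. *)
Lemma tensor_pure_span v : (v : FR) \in N.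
Proof.
have [[bDl bDr] [bZl bZr] _ univ] := tensorF.
pose c x t := Submod (N_pure x t).
have [||||g [gD gZ gb _]] := univ submod_of c.
- by move=> x y t; apply: val_inj; rewrite /= bDl.
- by move=> x t u; apply: val_inj; rewrite /= bDr.
- by move=> r x t; apply: val_inj; rewrite /= bZl.
- by move=> r x t; apply: val_inj; rewrite /= bZr.
have -> : v = submod_val (g v).
  apply: (@tensor_ext FR id (submod_val \o g)) => // [u w|r w|x t] /=.
  - by rewrite gD.
  - by rewrite gZ.
  - by rewrite gb.
exact: valP.
Qed.

End PureTensorSpan.

End TensorProduct.

Section AfgTensor.
Variables (R T : comPzRingType) (phi : {rmorphism R -> T}) (E : lmodType R)
  (F : lmodType T) (b : E -> T -> F).
Hypothesis tensorF : is_tensor_product phi b.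
Variables (S : comPzRingType) (f : {rmorphism R -> S}) (act : S -> E -> E).
Hypothesis actP : module_action act.
Hypothesis act_f : forall (r : R) (x : E), act (f r) x = r *: x.
Hypothesis act_fg : fin_gen_action act.
Local Notation FR := (restrict_scalars phi F).

Lemma act_additive s : {morph act s : x y / x + y}.
Proof. by have [_ _ _ actDr] := actP; exact: actDr. Qed.

Lemma act_scalable s : scalable (act s).
Proof. by have [_ actM _ _] := actP; move=> r x; rewrite -!act_f !actM mulrC. Qed.

Definition tensor_act (s : S) : F -> F :=
  sval (cid (tensor_map_ex tensorF (act_additive s) (act_scalable s))).

Lemma tensor_actD s : {morph tensor_act s : v w / v + w}.
Proof. by rewrite /tensor_act; case: cid => g []. Qed.

Lemma tensor_actZ s t v : tensor_act s (t *: v) = t *: tensor_act s v.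
Proof. by rewrite /tensor_act; case: cid => g []. Qed.

Lemma tensor_act_pure s x t : tensor_act s (b x t) = b (act s x) t.
Proof. by rewrite /tensor_act; case: cid => g []. Qed.

Lemma tensor_actM s s' v : tensor_act s (tensor_act s' v) = tensor_act (s * s') v.
Proof.
have [_ actM _ _] := actP.
apply: (tensor_ext tensorF (G := FR) (k1 := tensor_act s \o tensor_act s'))
  => [u w|u w|r w|r w|x t] /=.
- by rewrite !tensor_actD.
- exact: tensor_actD.
- by rewrite !tensor_actZ.
- by rewrite tensor_actZ.
- by rewrite !tensor_act_pure actM.
Qed.

HB.instance Definition _ s := GRing.isNmodMorphism.Build F F (tensor_act s)
  (morph_add0 (tensor_actD s), tensor_actD s).

Definition tensor_ops (i : T + S) : {additive F -> F} :=
  match i with inl t => *:%R t | inr s => tensor_act s end.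

Lemma tensor_ops_commute i j v :
  tensor_ops i (tensor_ops j v) = tensor_ops j (tensor_ops i v).
Proof.
case: i j => [t|s] [t'|s'] /=.
- by rewrite !scalerA mulrC.
- by rewrite tensor_actZ.
- by rewrite tensor_actZ.
- by rewrite !tensor_actM mulrC.
Qed.

Local Notation ccT := (center_commutant tensor_ops).

Definition tensor_ops_cc i : ccT :=
  CenterCommutant (family_in_center_commutant tensor_ops_commute i).

Definition scalar_cc (t : T) : ccT := tensor_ops_cc (inl t).

Lemma scalar_cc_zmod_morphism : zmod_morphism scalar_cc.
Proof. by move=> t t'; apply: cc_eq => v /=; rewrite scalerBl. Qed.

Lemma scalar_cc_monoid_morphism : monoid_morphism scalar_cc.
Proof. by split=> [|t t']; apply: cc_eq => v /=; rewrite ?scale1r ?scalerA. Qed.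

HB.instance Definition _ := GRing.isZmodMorphism.Build T ccT scalar_cc
  scalar_cc_zmod_morphism.
HB.instance Definition _ := GRing.isMonoidMorphism.Build T ccT scalar_cc
  scalar_cc_monoid_morphism.

Definition pure_span n (xs : 'I_n -> E) : {pred FR} :=
  act_span (@cc_fun _ _ tensor_ops) (fun i => b (xs i) 1).

Lemma pure_span_submod_closed n (xs : 'I_n -> E) : submod_closed (pure_span xs).
Proof.
have ccP := cc_fun_action tensor_ops.
split=> [|r u v u_in v_in]; first exact: (act_span0 ccP).
apply: (act_spanD ccP) v_in.
exact: (act_span_act ccP (scalar_cc (phi r)) u_in).
Qed.

HB.instance Definition _ n (xs : 'I_n -> E) :=
  GRing.isSubmodClosed.Build R FR (pure_span xs) (pure_span_submod_closed xs).

Lemma pure_tensor_in_span n (xs : 'I_n -> E) :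
  (forall x, exists cs : 'I_n -> S, x = \sum_(i < n) act (cs i) (xs i)) ->
  forall x t, b x t \in pure_span xs.
Proof.
have [[bDl _] _ bT _] := tensorF.
move=> xs_gen x t; rewrite -[t]mulr1 -bT.
have x1_in : b x 1 \in pure_span xs.
  have [cs ->] := xs_gen x; apply/act_spanP.
  exists (fun i => tensor_ops_cc (inr (cs i))).
  have bD1 : {morph b^~ 1 : y z / y + z} by move=> y z; exact: bDl.
  rewrite (big_morph _ bD1 (morph_add0 bD1)).
  by apply: eq_bigr => i _ /=; rewrite tensor_act_pure.
exact: (act_span_act (cc_fun_action tensor_ops) (scalar_cc t) x1_in).
Qed.

Lemma afg_tensor : afg F.
Proof.
have [n [xs xs_gen]] := act_fg.
exists ccT, scalar_cc, (@cc_fun _ _ tensor_ops).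
split=> //; first exact: cc_fun_action.
apply: (fin_gen_act_span (xs := fun i => b (xs i) 1)) => v.
exact: (tensor_pure_span tensorF (pure_tensor_in_span xs_gen) v).
Qed.

End AfgTensor.

Theorem proposition4p3 (R T : comPzRingType) (phi : {rmorphism R -> T})
    (E : lmodType R) (F : lmodType T) (b : E -> T -> F) :
  afg E -> is_tensor_product phi b -> afg F.
Proof.
move=> [S [f [act [actP act_f act_fg]]]] tensorF.
exact: (afg_tensor tensorF actP act_f act_fg).
Qed.
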